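(* Let $B\ge1$, $G=\{0,\frac1B,\dots,1\}$, $t\in G$ and $\eta\in(0,t)$. Any $f^*\in\mathcal U_\eta$ that maximises $\mathcal T_t$ over $\mathcal U_\eta$ satisfies: (i) $\mathcal E(f^* )=\eta$; (ii) writing $i_M:=B\max(\mathrm{supp}(f^* ))$, either (a) $f^*_0>f^*_1=f^*_2=\dots=f^*_{i_M-1}\ge f^*_{i_M}$, or (b) $i_M=Bt$ and $f^*_0=f^*_1=\dots=f^*_{i_M-1}\le f^*_{i_M}$.
   Context: Identify a probability mass function $f$ on $G$ with $(f_0,\dots,f_B)$, $f_i=f(i/B)$. Let $\mathcal T_t(f)=\sum_{i\ge Bt}f_i$, $\mathcal E(f)=\sum_{i=1}^B\frac iBf_i$ and $\mathrm{supp}(f)=\{i/B\in G:f_i>0\}$. $f$ is unimodal if there is $m$ with $f_0\le\dots\le f_m$ and $f_m\ge\dots\ge f_B$. $\mathcal U$ is the set of unimodal probability mass functions on $G$ and $\mathcal U_\eta=\{f\in\mathcal U:\mathcal E(f)\le\eta\}$. *)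

(* A pmf on G = {0, 1/B, ..., 1} is f : 'I_B.+1 -> R with f i = f(i/B). *)
From HB Require Import structures.
From mathcomp Require Import all_boot all_order all_algebra.
From mathcomp Require Import reals.
Set Implicit Arguments. Unset Strict Implicit. Unset Printing Implicit Defensive.
Import Order.TTheory GRing.Theory Num.Theory.
Local Open Scope ring_scope.

Section Defs.
Variable R : realType.
Variable B : nat.

Definition fat (f : 'I_B.+1 -> R) (i : nat) : R := f (inord i).

Definition is_pmf (f : 'I_B.+1 -> R) : Prop :=
  (forall i, 0 <= f i) /\ \sum_(i < B.+1) f i = 1.

(* T_t(f) for t = k/B : sum of f_i over i >= B t = k *)
Definition tailT (k : nat) (f : 'I_B.+1 -> R) : R :=
  \sum_(i < B.+1 | (k <= i)%N) f i.

Definition expE (f : 'I_B.+1 -> R) : R :=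
  \sum_(i < B.+1 | (1 <= i)%N) (i%:R / B%:R) * f i.

Definition iM (f : 'I_B.+1 -> R) : nat := (\max_(i < B.+1 | (0 < f i)%R) (i : nat))%N.

Definition unimodal (f : 'I_B.+1 -> R) : Prop :=
  exists m : nat, (m <= B)%N /\
    (forall i : nat, (i < m)%N -> fat f i <= fat f i.+1) /\
    (forall i : nat, (m <= i)%N -> (i < B)%N -> fat f i.+1 <= fat f i).

Definition in_U (f : 'I_B.+1 -> R) : Prop := is_pmf f /\ unimodal f.

Definition in_U_eta (eta : R) (f : 'I_B.+1 -> R) : Prop := in_U f /\ expE f <= eta.

End Defs.

(* The argument is a first-order optimality argument. If f is a unimodal pmf
   with mode m and d is a direction of total mass 0 that respects the zeros and
   the flat steps of f, then f + x d is still a unimodal pmf with mode m for all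
   small x > 0. Hence a maximiser f of T_t admits no such direction that raises
   the tail while E(f) < eta, and none that keeps the tail and lowers the mean:
   f + x d would be another maximiser with mean below eta, which (i) excludes.
   (i) If E(f) < eta, move a little mass towards a mode m >= Bt, or, when every
   mode lies below Bt, towards the uniform law on the last constant run of f;
   both raise T_t, as T_t(f) < 1.
   (ii) Moving mass from b down to a < b lowers E and keeps T_t unless
   a < Bt <= b. Forbidding such shifts between suitable neighbouring indices
   forces the flat shape (b) when f has a mode >= Bt, and (a) otherwise. *)

From HB Require Import structures.
From mathcomp Require Import all_boot all_order all_algebra.
From mathcomp Require Import reals.
From mathcomp Require Import ring lra zify.
Import Order.TTheory GRing.Theory Num.Theory.
Local Open Scope ring_scope.
Set Implicit Arguments. Unset Strict Implicit. Unset Printing Implicit Defensive.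

Section IntervalMonotone.
Variables (T : Type) (r : T -> T -> Prop).
Hypotheses (r_refl : forall x, r x x) (r_trans : forall y x z, r x y -> r y z -> r x z).

Lemma homo_leq_interval (u : nat -> T) a b :
  (forall i, (a <= i)%N -> (i < b)%N -> r (u i) (u i.+1)) ->
  forall i j, (a <= i)%N -> (i <= j)%N -> (j <= b)%N -> r (u i) (u j).
Proof.
move=> step i j ai ij jb.
apply: (@homo_leq_in T [pred n | a <= n <= b]%N u r r_refl r_trans) => //=.
- by move=> m n /andP[am _] /andP[_ nb] p /andP[mp pn]; apply/andP; lia.
- by move=> n /andP[an _] /andP[_ nb]; apply: step.
- by apply/andP; lia.
- by apply/andP; lia.
Qed.

End IntervalMonotone.

Lemma eq_interval (T : Type) (u : nat -> T) a b :
  (forall i, (a <= i)%N -> (i < b)%N -> u i = u i.+1) ->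
  forall i, (a <= i)%N -> (i <= b)%N -> u a = u i.
Proof.
move=> step i ai ib.
exact: (@homo_leq_interval T eq (@erefl T) (fun y x z => @etrans T x y z) u a b step a i).
Qed.

Section NearZero.
Variable R : realFieldType.
Implicit Types (P Q : R -> Prop) (a b c d : R).

Definition near0 P := exists2 e : R, 0 < e & forall x, 0 < x -> x <= e -> P x.

Lemma near0_mono P Q : (forall x, 0 < x -> P x -> Q x) -> near0 P -> near0 Q.
Proof. by move=> PQ [e e0 He]; exists e => // x x0 xe; apply/PQ/He. Qed.

Lemma near0_and P Q : near0 P -> near0 Q -> near0 (fun x => P x /\ Q x).
Proof.
move=> [e1 e10 H1] [e2 e20 H2]; exists (Num.min e1 e2); first by rewrite lt_min e10 e20.
by move=> x x0; rewrite le_min => /andP[xe1 xe2]; split; [apply: H1 | apply: H2].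
Qed.

Lemma near0_forall_ltn N (P : nat -> R -> Prop) :
  (forall i, (i < N)%N -> near0 (P i)) -> near0 (fun x => forall i, (i < N)%N -> P i x).
Proof.
elim: N => [|N IH] HP; first by exists 1 => // x _ _ i.
have [e e0 He] := near0_and (IH (fun i iN => HP i (ltnW iN))) (HP N (ltnSn N)).
exists e => // x x0 xe i; rewrite ltnS leq_eqVlt => /orP[/eqP->|iN].
  exact: (He x x0 xe).2.
exact: (He x x0 xe).1.
Qed.

Lemma near0_imply (b : bool) P : (b -> near0 P) -> near0 (fun x => b -> P x).
Proof. by case: b => [/(_ isT)|_]; [apply: near0_mono | exists 1]. Qed.

Lemma near0_le_affine a b c d : a <= c -> (a = c -> b <= d) ->
  near0 (fun x => a + x * b <= c + x * d).
Proof.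
move=> ac eq_bd; have [bd|db] := leP b d.
  by exists 1 => // x x0 _; rewrite lerD // ler_wpM2l // ltW.
have {}ac : a < c by rewrite lt_neqAle ac andbT; apply/eqP => /eq_bd; rewrite leNgt db.
exists ((c - a) / (b - d)) => [|x x0]; first by rewrite divr_gt0 // subr_gt0.
rewrite ler_pdivlMr ?subr_gt0 //; lra.
Qed.

Lemma near0_witness P : near0 P -> exists2 x, 0 < x & P x.
Proof. by move=> [e e0 He]; exists e => //; apply: He. Qed.

End NearZero.

Section Unimodal.
Variables (R : realType) (B : nat).
Implicit Types (f : 'I_B.+1 -> R) (m : nat).

Lemma fat_val f (i : 'I_B.+1) : fat f i = f i.
Proof. by rewrite /fat inord_val. Qed.

Definition unimodal_at f m : Prop :=
  (m <= B)%N /\ (forall i : nat, (i < m)%N -> fat f i <= fat f i.+1) /\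
    (forall i : nat, (m <= i)%N -> (i < B)%N -> fat f i.+1 <= fat f i).

Lemma fat_le_mode f m i : unimodal_at f m -> (i <= B)%N -> fat f i <= fat f m.
Proof.
move=> [mB [f_up f_down]] iB; have [im|mi] := leqP i m.
  by apply: (@homo_leq_interval R <=%R lexx le_trans (fat f) 0 m) => // j _ /f_up.
have ge_trans : forall y x z : R, y <= x -> z <= y -> z <= x.
  by move=> y x z xy yz; apply: le_trans yz xy.
apply: (@homo_leq_interval R (fun x y => y <= x) lexx ge_trans (fat f) m B) => //; lia.
Qed.

Lemma fat_mode_gt0 f m : is_pmf f -> unimodal_at f m -> 0 < fat f m.
Proof.
move=> [f_ge0 f_sum1] mode_m; rewrite lt_def; apply/andP; split; last exact: f_ge0.
apply/negP => /eqP fm0; have : \sum_(i < B.+1) f i == 0.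
  rewrite psumr_eq0 //; apply/allP => i _; rewrite eq_le f_ge0 andbT -fm0 -fat_val.
  by apply: fat_le_mode mode_m _; rewrite -ltnS.
by rewrite f_sum1 oner_eq0.
Qed.

Lemma unimodal_at_pred f s : unimodal_at f s -> (0 < s)%N -> fat f s.-1 = fat f s ->
  unimodal_at f s.-1.
Proof.
move=> [sB [f_up f_down]] s_gt0 e; split; first lia; split.
  by move=> i ilt; apply: f_up; lia.
move=> i si iB; have [->|ne] := eqVneq i s.-1; first by rewrite prednK // e.
by apply: f_down => //; lia.
Qed.

Lemma unimodal_at_succ f m : unimodal_at f m -> (m < B)%N -> fat f m.+1 = fat f m ->
  unimodal_at f m.+1.
Proof.
move=> [_ [f_up f_down]] mB e; split=> //; split; last by move=> i mi; apply: f_down; lia.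
by move=> i; rewrite ltnS leq_eqVlt => /orP[/eqP->|/f_up//]; rewrite e.
Qed.

Lemma exists_last_mode f m : unimodal_at f m ->
  exists s, unimodal_at f s /\ (s = B \/ fat f s.+1 < fat f s).
Proof.
move: {2}(B - m)%N (leqnn (B - m)) => n.
elim: n m => [|n IH] m Bm mode_m; have [Bm'|mB] := leqP B m;
  try by exists m; split=> //; left; have := mode_m.1; lia.
have := mode_m.2.2 m (leqnn m) mB; rewrite le_eqVlt => /orP[/eqP e|lt].
  by apply: (IH m.+1); [lia | apply: unimodal_at_succ].
by exists m; split=> //; right.
Qed.

Lemma last_flat_run f : exists2 q, (q <= B)%N &
  (forall i, (q <= i <= B)%N -> fat f i = fat f B) /\ ((0 < q)%N -> fat f q.-1 <> fat f q).
Proof.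
pose P n := [forall i : 'I_B.+1, (n <= i)%N ==> (f i == fat f B)].
have PB : P B.
  apply/forallP => i; apply/implyP => Bi.
  by rewrite -fat_val; have -> : (i : nat) = B by have := ltn_ord i; lia.
have PE : exists n, P n by exists B.
case: (ex_minnP PE) => q /forallP Pq q_min.
have flat i : (q <= i <= B)%N -> fat f i = fat f B.
  by move=> /andP[qi iB]; have /implyP := Pq (inord i); rewrite inordK ?ltnS // => /(_ qi)/eqP.
have qB := q_min B PB.
exists q => //; split=> // q_gt0 e.
suff /q_min : P q.-1 by rewrite leqNgt prednK ?leqnn.
apply/forallP => i; apply/implyP => qi; have [iq|iq] := eqVneq (i : nat) q.-1.
  by rewrite -fat_val iq e flat ?leqnn.
by have /implyP := Pq i; apply; lia.
Qed.

Lemma leq_iM f i : (i <= B)%N -> 0 < fat f i -> (i <= iM f)%N.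
Proof.
move=> iB fi.
have := @leq_bigmax_cond _ (fun j : 'I_B.+1 => 0 < f j) (fun j => nat_of_ord j) (inord i) fi.
by rewrite inordK.
Qed.

Lemma iM_leqB f : (iM f <= B)%N.
Proof. by apply/bigmax_leqP => i _; rewrite -ltnS. Qed.

Lemma fat_iM_gt0 f i : (i <= B)%N -> 0 < fat f i -> 0 < fat f (iM f).
Proof.
move=> iB fi; rewrite /iM.
have [j fj ->] := @eq_bigmax_cond _ (fun j : 'I_B.+1 => 0 < f j) (fun j => nat_of_ord j)
  (ltac:(by apply/card_gt0P; exists (inord i))).
by rewrite fat_val.
Qed.

Lemma fat_gt_iM f i : is_pmf f -> (i <= B)%N -> (iM f < i)%N -> fat f i = 0.
Proof.
move=> [f_ge0 _] iB lt; apply/eqP; rewrite eq_le f_ge0 andbT leNgt.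
by apply/negP => /(leq_iM iB); lia.
Qed.

Lemma fat_iM_succ_lt f i : is_pmf f -> (i <= B)%N -> 0 < fat f i -> (iM f < B)%N ->
  fat f (iM f).+1 < fat f (iM f).
Proof. by move=> pmf_f iB fi MB; rewrite (fat_gt_iM pmf_f MB) //; apply: fat_iM_gt0 fi. Qed.

Lemma tailT_le_expE k f : (forall i, 0 <= f i) -> k%:R / B%:R * tailT k f <= expE f.
Proof.
move=> f_ge0; rewrite /tailT /expE mulr_sumr.
apply: (@le_trans _ _ (\sum_(i < B.+1 | (k <= i)%N) (i%:R / B%:R) * f i)).
  by apply: ler_sum => i ki; rewrite ler_wpM2r // ler_wpM2r ?invr_ge0 // ler_nat.
rewrite [X in X <= _]big_mkcond [X in _ <= X]big_mkcond /=; apply: ler_sum => i _.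
have term_ge0 : 0 <= i%:R / B%:R * f i by rewrite mulr_ge0 ?divr_ge0.
case: ifP => _; case: ifP => [_|/negbT]; rewrite ?term_ge0 //.
by rewrite -eqn0Ngt => /eqP->; rewrite !mul0r.
Qed.

End Unimodal.

Section Perturbation.
Variables (R : realType) (B : nat).
Implicit Types (f d g : 'I_B.+1 -> R) (m : nat).

Definition admissible f m d : Prop :=
  [/\ forall i : 'I_B.+1, f i = 0 -> 0 <= d i,
      forall i, (i < m)%N -> fat f i = fat f i.+1 -> fat d i <= fat d i.+1 &
      forall i, (m <= i)%N -> (i < B)%N -> fat f i.+1 = fat f i -> fat d i.+1 <= fat d i].

Definition perturb f d (x : R) : 'I_B.+1 -> R := fun i => f i + x * d i.

Lemma perturb_near0 f m d : is_pmf f -> unimodal_at f m -> admissible f m d ->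
  \sum_i d i = 0 ->
  near0 (fun x => is_pmf (perturb f d x) /\ unimodal_at (perturb f d x) m).
Proof.
move=> [f_ge0 f_sum1] [mB [f_up f_down]] [d_ge0 d_up d_down] d_sum0.
have : near0 (fun x => forall i, (i < B.+1)%N ->
    0 + x * 0 <= fat f i + x * fat d i /\
    ((i < m)%N -> fat f i + x * fat d i <= fat f i.+1 + x * fat d i.+1) /\
    ((m <= i < B)%N -> fat f i.+1 + x * fat d i.+1 <= fat f i + x * fat d i)).
  apply: near0_forall_ltn => i _.
  apply: near0_and; last apply: near0_and.
  - by apply: near0_le_affine; [apply: f_ge0 | move/esym; apply: d_ge0].
  - by apply: near0_imply => im; apply: near0_le_affine; [apply: f_up | apply: d_up].
  - apply: near0_imply => /andP[mi iB].
    by apply: near0_le_affine; [apply: f_down | apply: d_down].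
apply: near0_mono => x _ Hx; split; [split|split=> //; split].
- by move=> i; have [+ _] := Hx i (ltn_ord i); rewrite !fat_val mulr0 addr0.
- by rewrite /perturb big_split /= f_sum1 -mulr_sumr d_sum0 mulr0 addr0.
- by move=> i im; have [_ [+ _]] := Hx i ltac:(lia); apply.
- by move=> i mi iB; have [_ [_ +]] := Hx i ltac:(lia); apply; apply/andP.
Qed.

Lemma tailT_perturb k f d x : tailT k (perturb f d x) = tailT k f + x * tailT k d.
Proof. by rewrite /tailT /perturb big_split /= mulr_sumr. Qed.

Lemma expE_perturb f d x : expE (perturb f d x) = expE f + x * expE d.
Proof.
rewrite /expE /perturb mulr_sumr -big_split /=.
by apply: eq_bigr => i _; rewrite mulrDr mulrCA.
Qed.

Lemma tailTB k g d : tailT k (fun i => g i - d i) = tailT k g - tailT k d.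
Proof. exact: sumrB. Qed.

Lemma expEB g d : expE (fun i => g i - d i) = expE g - expE d.
Proof. by rewrite /expE -sumrB; apply: eq_bigr => i _; rewrite mulrBr. Qed.

(* [f + x * towards g f] is the mixture [(1 - x S) f + x g], where S is the mass of g. *)
Definition towards g f : 'I_B.+1 -> R := fun i => g i - (\sum_j g j) * f i.

Lemma sum_towards g f : is_pmf f -> \sum_i towards g f i = 0.
Proof. by move=> [_ f_sum1]; rewrite sumrB -mulr_sumr f_sum1 mulr1 subrr. Qed.

Lemma tailT_towards k g f : tailT k (towards g f) = tailT k g - (\sum_j g j) * tailT k f.
Proof. by rewrite tailTB /tailT mulr_sumr. Qed.

Lemma admissible_towards f m g : (forall i, 0 <= g i) ->
  (forall i, (i < m)%N -> fat f i = fat f i.+1 -> fat g i <= fat g i.+1) ->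
  (forall i, (m <= i)%N -> (i < B)%N -> fat f i.+1 = fat f i -> fat g i.+1 <= fat g i) ->
  admissible f m (towards g f).
Proof.
move=> g_ge0 g_up g_down; pose S := \sum_j g j.
have fatT i : fat (towards g f) i = fat g i - S * fat f i by [].
split.
- by move=> i fi; rewrite /towards fi mulr0 subr0.
- by move=> i im e; rewrite !fatT e lerD2r; apply: g_up.
- by move=> i mi iB e; rewrite !fatT e lerD2r; apply: g_down.
Qed.

Definition delta (a : nat) : 'I_B.+1 -> R := fun i => (i == a :> nat)%:R.

Lemma fat_delta a i : (i <= B)%N -> fat (delta a) i = (i == a)%:R.
Proof. by move=> iB; rewrite /fat /delta inordK. Qed.

Lemma sum_delta_cond (P : pred 'I_B.+1) (F : 'I_B.+1 -> R) a : (a <= B)%N ->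
  \sum_(i | P i) F i * delta a i = if P (inord a) then F (inord a) else 0.
Proof.
move=> aB; rewrite big_mkcond (bigD1 (inord a)) //= big1 => [|i ia].
  by rewrite /delta inordK // eqxx mulr1 addr0; case: (P _).
rewrite /delta; case: eqP => [iaE|_]; last by rewrite mulr0; case: (P i).
by case/eqP: ia; apply: val_inj; rewrite /= inordK.
Qed.

Lemma sum_delta a : (a <= B)%N -> \sum_i delta a i = 1.
Proof.
move=> aB; rewrite -[RHS](sum_delta_cond predT (fun=> 1) aB).
by apply: eq_bigr => i _; rewrite mul1r.
Qed.

Lemma tailT_delta k a : (a <= B)%N -> tailT k (delta a) = (k <= a)%:R.
Proof.
move=> aB; transitivity (\sum_(i < B.+1 | (k <= i)%N) 1 * delta a i).
  by apply: eq_bigr => i _; rewrite mul1r.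
by rewrite sum_delta_cond // inordK //; case: (k <= a)%N.
Qed.

Lemma expE_delta a : (a <= B)%N -> expE (delta a) = a%:R / B%:R.
Proof.
by move=> aB; rewrite /expE sum_delta_cond // inordK //; case: a aB => [|a] _ //=; rewrite mul0r.
Qed.

Definition shift a b : 'I_B.+1 -> R := fun i => delta a i - delta b i.

Lemma sum_shift a b : (a <= B)%N -> (b <= B)%N -> \sum_i shift a b i = 0.
Proof. by move=> aB bB; rewrite sumrB !sum_delta // subrr. Qed.

Lemma tailT_shift k a b : (a <= B)%N -> (b <= B)%N ->
  tailT k (shift a b) = (k <= a)%:R - (k <= b)%:R.
Proof. by move=> aB bB; rewrite tailTB !tailT_delta. Qed.

Lemma expE_shift a b : (a <= B)%N -> (b <= B)%N ->
  expE (shift a b) = a%:R / B%:R - b%:R / B%:R.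
Proof. by move=> aB bB; rewrite expEB !expE_delta. Qed.

Definition ind_from q : 'I_B.+1 -> R := fun i => (q <= i)%:R.

Lemma admissible_towards_ind_from f m q : (m < q)%N -> (q <= B)%N ->
  fat f q.-1 <> fat f q -> admissible f m (towards (ind_from q) f).
Proof.
move=> mq qB q_start; apply: admissible_towards => [i|i im _|i mi iB e];
  rewrite /fat /ind_from /= ?ler0n ?inordK ?ler_nat //; try lia.
suff : q != i.+1 by lia.
by apply/eqP => qE; apply: q_start; rewrite qE /= e.
Qed.

Lemma tailT_towards_ind_from_gt0 k f s q : is_pmf f -> 0 < fat f s -> (s < q)%N ->
  (q <= B)%N -> (forall i, (q <= i <= B)%N -> fat f i = fat f B) -> (k <= B)%N ->
  tailT k f < 1 -> 0 < tailT k (towards (ind_from q) f).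
Proof.
move=> pmf_f fs sq qB flat kB T1; pose g := ind_from q; pose S := \sum_j g j.
have tail_g : 1 <= tailT k g.
  rewrite /tailT (bigD1 ord_max) //= /g /ind_from qB lerDl; exact: sumr_ge0.
rewrite tailT_towards -/S; have [qk|kq] := leqP k q.
  have -> : S = tailT k g.
    rewrite /S /tailT [LHS](bigID (fun i : 'I_B.+1 => (k <= i)%N)) /=.
    rewrite [X in _ + X]big1 ?addr0 // => i.
    rewrite -ltnNge /g /ind_from => ik; rewrite (_ : (q <= i)%N = false) ?mulr0n //.
    by apply/negbTE; rewrite -ltnNge; lia.
  by rewrite subr_gt0 -[X in _ < X]mulr1 ltr_pM2l // (lt_le_trans ltr01).
have tail_f : tailT k f = fat f B * tailT k g.
  rewrite /tailT mulr_sumr; apply: eq_bigr => i ki.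
  by rewrite /g /ind_from (_ : (q <= i)%N) ?mulr1 -?fat_val ?flat //; have := ltn_ord i; lia.
(* The run [q, B] misses s, which carries positive mass. *)
have Sc : S * fat f B < 1.
  rewrite /fat in fs; have gs : g (inord s) = 0.
    rewrite /g /ind_from /= inordK; last lia.
    by have -> : (q <= s)%N = false by apply/negbTE; rewrite -ltnNge.
  rewrite -pmf_f.2 /S mulr_suml (bigD1 (inord s)) //= [X in _ < X](bigD1 (inord s)) //=.
  rewrite gs mul0r add0r ltr_pwDl //; apply: ler_sum => i _; rewrite /g /ind_from /=.
  case: (leqP q i) => qi; last by rewrite mulr0n mul0r; apply: pmf_f.1.
  by rewrite mulr1n mul1r -fat_val flat //; have := ltn_ord i; lia.
rewrite tail_f (_ : _ - _ = tailT k g * (1 - S * fat f B)); last by ring.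
by rewrite mulr_gt0 ?subr_gt0 // (lt_le_trans ltr01).
Qed.

(* Raising f at a and lowering it at b must not break a flat step of f next to a or b. *)
Lemma admissible_shift f m a b : (m <= B)%N -> (a < b)%N -> (b <= B)%N -> 0 < fat f b ->
  ((a < m)%N -> fat f a != fat f a.+1) ->
  ((b.-1 < m)%N -> fat f b.-1 != fat f b) ->
  ((0 < a)%N -> (m <= a.-1)%N -> fat f a != fat f a.-1) ->
  ((m <= b)%N -> (b < B)%N -> fat f b.+1 != fat f b) ->
  admissible f m (shift a b).
Proof.
move=> mB ab bB fb a_up b_up a_down b_down.
have fatS i : (i <= B)%N -> fat (shift a b) i = (i == a)%:R - (i == b)%:R.
  by move=> iB; rewrite -!fat_delta.
have neg_le_pos (x y : nat) : 0%:R - x%:R <= y%:R - 0%:R :> R.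
  by rewrite sub0r subr0 (le_trans _ (ler0n _ _)) // oppr_le0.
split.
- move=> i fi; rewrite /shift /delta.
  have /negbTE-> : (i : nat) != b by apply: contraTneq fb => <-; rewrite fat_val fi ltxx.
  by rewrite subr0.
- move=> i im e; rewrite !fatS; try lia.
  have /negbTE-> : i != a by apply/eqP => ia; move: (a_up ltac:(lia)); rewrite -ia e eqxx.
  have /negbTE-> : i.+1 != b by apply/eqP => ib; move: (b_up ltac:(lia)); rewrite -ib e eqxx.
  exact: neg_le_pos.
- move=> i mi iB e; rewrite !fatS; try lia.
  have /negbTE-> : i.+1 != a.
    by apply/eqP => ia; move: (a_down ltac:(lia) ltac:(lia)); rewrite -ia /= e eqxx.
  have /negbTE-> : i != b.
    by apply/eqP => ib; move: (b_down ltac:(lia) ltac:(lia)); rewrite -ib e eqxx.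
  exact: neg_le_pos.
Qed.

End Perturbation.

Arguments delta {R B} a _.
Arguments shift {R B} a b _.
Arguments ind_from {R B} q _.

Section Maximiser.
Variables (R : realType) (B k : nat) (eta : R).
Hypotheses (k_gt0 : (0 < k)%N) (k_leB : (k <= B)%N) (eta_lt : eta < k%:R / B%:R).
Implicit Types (f g d : 'I_B.+1 -> R) (m : nat).

Definition maximiser f :=
  in_U_eta eta f /\ forall g, in_U_eta eta g -> tailT k g <= tailT k f.

Lemma tailT_lt1 f : in_U_eta eta f -> tailT k f < 1.
Proof.
move=> [[[f_ge0 _] _] Ef]; have kB_gt0 : 0 < k%:R / B%:R :> R by rewrite divr_gt0 ?ltr0n //; lia.
by rewrite -(ltr_pM2l kB_gt0) mulr1 (le_lt_trans (tailT_le_expE k f_ge0)) // (le_lt_trans Ef).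
Qed.

Lemma maximiser_no_ascent f m d : maximiser f -> expE f < eta ->
  unimodal_at f m -> admissible f m d -> \sum_i d i = 0 -> 0 < tailT k d -> False.
Proof.
move=> [[[pmf_f _] _] f_max] Ef mode_m adm_d sum_d tail_d.
have Ef_neq : expE f = eta -> expE d <= 0 by move=> e; move: Ef; rewrite e ltxx.
have [x x_gt0 [[pmf_g mode_g] Eg]] := near0_witness (near0_and
  (perturb_near0 pmf_f mode_m adm_d sum_d) (near0_le_affine (ltW Ef) Ef_neq)).
have g_in : in_U_eta eta (perturb f d x).
  by split; [split=> //; exists m | rewrite expE_perturb; move: Eg; rewrite mulr0 addr0].
by have := f_max _ g_in; rewrite tailT_perturb; have := mulr_gt0 x_gt0 tail_d; lra.
Qed.

Lemma maximiser_mean_mode_ge f m : maximiser f -> unimodal_at f m -> (k <= m)%N ->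
  expE f < eta -> False.
Proof.
move=> f_max mode_m km Ef; have mB := mode_m.1.
apply: (maximiser_no_ascent f_max Ef mode_m (d := towards (delta m) f)).
- apply: admissible_towards => [i|i im _|i mi iB _]; rewrite ?fat_delta; try lia.
  + exact: ler0n.
  + by have /negbTE-> : i != m by lia.
  + by have /negbTE-> : i.+1 != m by lia.
- exact: sum_towards f_max.1.1.1.
- rewrite tailT_towards sum_delta // tailT_delta // km mul1r subr_gt0.
  exact: tailT_lt1 f_max.1.
Qed.

Lemma maximiser_mean_last_mode_lt f s : maximiser f -> unimodal_at f s -> (s < k)%N ->
  fat f s.+1 < fat f s -> expE f < eta -> False.
Proof.
move=> f_max mode_s sk s_desc Ef; have pmf_f := f_max.1.1.1.
have [q qB [flat q_start]] := last_flat_run f.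
have sq : (s < q)%N.
  by rewrite ltnNge; apply/negP => qs; move: s_desc; rewrite !flat ?ltxx //; apply/andP; lia.
apply: (maximiser_no_ascent f_max Ef mode_s (d := towards (ind_from q) f)).
- by apply: admissible_towards_ind_from => //; apply: q_start; lia.
- exact: sum_towards pmf_f.
apply: tailT_towards_ind_from_gt0 pmf_f (fat_mode_gt0 pmf_f mode_s) sq qB flat k_leB _.
exact: tailT_lt1 f_max.1.
Qed.

Lemma maximiser_mean f : maximiser f -> expE f = eta.
Proof.
move=> f_max; have [m mode_m] := f_max.1.1.2.
have [s [mode_s s_last]] := exists_last_mode mode_m.
apply/eqP; rewrite eq_le f_max.1.2 leNgt; apply/negP => Ef.
have [ks|sk] := leqP k s; first exact: maximiser_mean_mode_ge f_max mode_s ks Ef.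
apply: (maximiser_mean_last_mode_lt f_max mode_s sk _ Ef).
by case: s_last => // sB; move: sk; rewrite sB ltnNge k_leB.
Qed.

Lemma maximiser_no_descent f m d : maximiser f -> unimodal_at f m -> admissible f m d ->
  \sum_i d i = 0 -> 0 <= tailT k d -> expE d < 0 -> False.
Proof.
move=> f_max mode_m adm_d sum_d tail_d Ed; have [[[pmf_f _] _] f_opt] := f_max.
have [x x_gt0 [pmf_g mode_g]] := near0_witness (perturb_near0 pmf_f mode_m adm_d sum_d).
have Eg : expE (perturb f d x) < eta.
  by rewrite expE_perturb (maximiser_mean f_max) gtrDl pmulr_rlt0.
have g_max : maximiser (perturb f d x).
  split; first by split; [split=> //; exists m | exact: ltW].
  move=> h h_in; rewrite tailT_perturb (le_trans (f_opt h h_in)) // lerDl.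
  exact: mulr_ge0 (ltW x_gt0) tail_d.
by move: Eg; rewrite (maximiser_mean g_max) ltxx.
Qed.

Lemma maximiser_no_shift f m a b : maximiser f -> unimodal_at f m ->
  (a < b)%N -> (b <= B)%N -> 0 < fat f b ->
  ((a < m)%N -> fat f a != fat f a.+1) ->
  ((b.-1 < m)%N -> fat f b.-1 != fat f b) ->
  ((0 < a)%N -> (m <= a.-1)%N -> fat f a != fat f a.-1) ->
  ((m <= b)%N -> (b < B)%N -> fat f b.+1 != fat f b) ->
  ((k <= b)%N -> (k <= a)%N) -> False.
Proof.
move=> f_max mode_m ab bB fb a_up b_up a_down b_down k_ab; have aB : (a <= B)%N by lia.
apply: (maximiser_no_descent f_max mode_m
  (admissible_shift mode_m.1 ab bB fb a_up b_up a_down b_down)).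
- exact: sum_shift.
- rewrite tailT_shift // subr_ge0 ler_nat.
  by case: (k <= b)%N k_ab => // ->.
- by rewrite expE_shift // subr_lt0 ltr_pM2r ?invr_gt0 ?ltr0n ?ltr_nat //; lia.
Qed.

Lemma iM_mode_ge f m : maximiser f -> unimodal_at f m -> (k <= m)%N -> iM f = m.
Proof.
move=> f_max mode_m km; have pmf_f := f_max.1.1.1; have mB := mode_m.1.
have fm := fat_mode_gt0 pmf_f mode_m; have fM := fat_iM_gt0 mB fm.
apply/eqP; rewrite eqn_leq leq_iM // andbT leqNgt; apply/negP => mM.
apply: (maximiser_no_shift f_max mode_m mM (iM_leqB f) fM); try lia.
by move=> _ MB; apply/negbT/lt_eqF; apply: fat_iM_succ_lt pmf_f mB fm MB.
Qed.

Lemma mode_ge_eq_k f m : maximiser f -> unimodal_at f m -> (k <= m)%N -> m = k.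
Proof.
move=> f_max mode_m km; have pmf_f := f_max.1.1.1; have mB := mode_m.1.
have fm := fat_mode_gt0 pmf_f mode_m; have iMm := iM_mode_ge f_max mode_m km.
apply/eqP; rewrite eqn_leq km andbT leqNgt; apply/negP => km'; have m_gt0 : (0 < m)%N by lia.
have := mode_m.2.1 m.-1 ltac:(lia); rewrite prednK // le_eqVlt => /orP[/eqP e|lt].
  by have := iM_mode_ge f_max (unimodal_at_pred mode_m m_gt0 e) ltac:(lia); lia.
apply: (maximiser_no_shift f_max mode_m (a := m.-1) (b := m)); try lia.
- by rewrite prednK // lt_eqF.
- by rewrite lt_eqF.
- by move=> _ MB; rewrite -iMm; apply/negbT/lt_eqF; apply: fat_iM_succ_lt pmf_f mB fm _; lia.
Qed.

Lemma maximiser_mode_ge f m : maximiser f -> unimodal_at f m -> (k <= m)%N ->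
  iM f = k /\ (forall i, (i <= (iM f).-1)%N -> fat f i = fat f 0) /\
  fat f (iM f).-1 <= fat f (iM f).
Proof.
move=> f_max mode_m km; have pmf_f := f_max.1.1.1.
have mk := mode_ge_eq_k f_max mode_m km; rewrite (iM_mode_ge f_max mode_m km) mk.
rewrite {}mk in mode_m.
split=> //; split; last by have := mode_m.2.1 k.-1; rewrite prednK //; apply; lia.
move=> i ik; symmetry; apply: (eq_interval (u := fat f) (b := k.-1)) => // j _ jk.
have := mode_m.2.1 j ltac:(lia); rewrite le_eqVlt => /orP[/eqP//|lt]; exfalso.
have fj1 : 0 < fat f j.+1 by apply: le_lt_trans lt; apply: pmf_f.1.
apply: (maximiser_no_shift f_max mode_m (a := j) (b := j.+1)) => //; try lia.
- by rewrite lt_eqF.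
- by rewrite /= lt_eqF.
Qed.

Lemma last_mode_lt_eq0 f s : maximiser f -> unimodal_at f s -> (s < k)%N ->
  fat f s.+1 < fat f s -> s = 0%N.
Proof.
move=> f_max mode_s sk s_desc; apply/eqP; rewrite eqn0Ngt; apply/negP => s_gt0.
have fs := fat_mode_gt0 f_max.1.1.1 mode_s.
have no_shift m : unimodal_at f m -> (s.-1 <= m <= s)%N ->
    ((s.-1 < m)%N -> fat f s.-1 != fat f s) -> False.
  move=> mode_m /andP[sm ms] s_up.
  apply: (maximiser_no_shift f_max mode_m (a := s.-1) (b := s)) => //; try lia.
  - by move=> /s_up; rewrite prednK.
  - by rewrite lt_eqF.
have := mode_s.2.1 s.-1 ltac:(lia); rewrite prednK // le_eqVlt => /orP[/eqP e|lt].
  by apply: (no_shift s.-1 (unimodal_at_pred mode_s s_gt0 e)); [lia | rewrite ltnn].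
by apply: (no_shift s mode_s) => [|_]; [lia | rewrite lt_eqF].
Qed.

Lemma maximiser_last_mode_lt f s : maximiser f -> unimodal_at f s -> (s < k)%N ->
  fat f s.+1 < fat f s ->
  fat f 1 < fat f 0 /\
  (forall i, (1 <= i)%N -> (i <= (iM f).-1)%N -> fat f i = fat f 1) /\
  fat f (iM f) <= fat f (iM f).-1.
Proof.
move=> f_max mode_s sk s_desc; have pmf_f := f_max.1.1.1.
have s0 := last_mode_lt_eq0 f_max mode_s sk s_desc; subst s.
have f0 := fat_mode_gt0 pmf_f mode_s; have MB := iM_leqB f.
split=> //; split; last first.
  have [->|M_gt0] := posnP (iM f); first exact: lexx.
  by have := mode_s.2.2 (iM f).-1 (leq0n _) ltac:(lia); rewrite prednK.
move=> i i1 i_M; symmetry; apply: (eq_interval (u := fat f) (b := (iM f).-1)) => // j j1 jM.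
have := mode_s.2.2 j (leq0n j) ltac:(lia); rewrite le_eqVlt => /orP[/eqP->//|lt]; exfalso.
have [jk|kj] := ltnP j k.
  apply: (maximiser_no_shift f_max mode_s (a := 0) (b := j)); try lia.
  - exact: le_lt_trans (pmf_f.1 _) lt.
  - by move=> _ _; rewrite lt_eqF.
apply: (maximiser_no_shift f_max mode_s (a := j.+1) (b := iM f)); try lia.
- exact: fat_iM_gt0 (leq0n B) f0.
- by move=> _ _; rewrite /= lt_eqF.
- by move=> _ MB'; apply/negbT/lt_eqF; apply: fat_iM_succ_lt pmf_f (leq0n B) f0 MB'.
Qed.

End Maximiser.

Theorem proposition4 (R : realType) (B k : nat) (eta : R) (fs : 'I_B.+1 -> R) :
  (1 <= B)%N -> (k <= B)%N ->
  0 < eta -> eta < k%:R / B%:R ->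
  in_U_eta eta fs ->
  (forall g : 'I_B.+1 -> R, in_U_eta eta g -> tailT k g <= tailT k fs) ->
  expE fs = eta /\
  ( ( fat fs 0 > fat fs 1 /\
      (forall i : nat, (1 <= i)%N -> (i <= (iM fs).-1)%N -> fat fs i = fat fs 1) /\
      fat fs (iM fs).-1 >= fat fs (iM fs) )
  \/
    ( iM fs = k /\
      (forall i : nat, (i <= (iM fs).-1)%N -> fat fs i = fat fs 0) /\
      fat fs (iM fs).-1 <= fat fs (iM fs) ) ).
Proof.
(* [1 <= B] is implied by [0 < k <= B]. *)
move=> _ kB eta_gt0 eta_lt fU f_opt.
have k_gt0 : (0 < k)%N.
  by rewrite lt0n; apply: contraTneq eta_lt => ->; rewrite mulr0n mul0r -leNgt ltW.
have f_max : maximiser k eta fs := conj fU f_opt.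
split; first exact: (maximiser_mean k_gt0 kB eta_lt f_max).
have [m mode_m] := fU.1.2; have [s [mode_s s_last]] := exists_last_mode mode_m.
have [ks|sk] := leqP k s; [right|left].
  exact: (maximiser_mode_ge k_gt0 kB eta_lt f_max mode_s ks).
apply: (maximiser_last_mode_lt k_gt0 kB eta_lt f_max mode_s sk).
by case: s_last => // sB; move: sk; rewrite sB ltnNge kB.
Qed.
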